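(* For every integer $n\ge 1$, the toric ideal $I_{S_n}$ has a state polytope that is unimodularly equivalent to the permutohedron $\Pi_n$. In particular, $I_{S_n}$ has exactly $n!$ distinct initial ideals, namely the initial ideals with respect to the weight vectors $(\pi,\pi^c)\in\mathbb{R}^{2n}$ for $\pi\in\mathfrak{S}_n$.
   Context: With $e_i\in\mathbb{R}^{n+1}$ the standard basis vectors, let $s_i=e_1+e_{i+1}+e_{n+1}$ for $1\le i<n$, $s_n=e_1+e_{n+1}$, $s_i=e_{i+1-n}+e_{n+1}$ for $n<i<2n$, $s_{2n}=e_{n+1}$. The toric ideal $I_{S_n}$ is the kernel of $\mathbb{C}[t_1,\dots,t_{2n}]\to\mathbb{C}[x_1,\dots,x_{n+1}]$, $t_i\mapsto x^{s_i}$; it is homogeneous. For a weight $w\in\mathbb{R}^{2n}$, the initial ideal is generated by the initial forms (terms of maximal $w$-weight, ties broken by a fixed monomial order) of elements of the ideal. The Gröbner fan of a homogeneous ideal is the fan whose cones are the closures of the sets of weight vectors giving the same initial ideal; a state polytope of the ideal is a polytope whose normal fan (with normal cones $N_P(F)=\{a:\ F \text{ is the set of maximizers of } a\cdot x \text{ on } P\}$) equals the Gröbner fan. $\Pi_n=\mathrm{conv}\{(\pi_1,\dots,\pi_n):\pi\in\mathfrak{S}_n\}$, and for $\pi\in\mathfrak{S}_n$, $\pi^c=(n+1-\pi_1,\dots,n+1-\pi_n)$. Polytopes $P,P'\subseteq\mathbb{R}^m$ are unimodularly equivalent if $P'=MP+v$ with $M\in\mathrm{GL}_m(\mathbb{Z})$,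 $v\in\mathbb{Z}^m$; for $P\subseteq\mathbb{R}^N$, $P'\subseteq\mathbb{R}^m$, $N>m$, this means $P$ is unimodularly equivalent to $P'\times\{0\}$. *)

From HB Require Import structures.
From mathcomp Require Import all_boot all_order all_fingroup all_algebra.
From mathcomp Require Import reals.
From mathcomp Require Import complex.
From mathcomp Require Import mpoly.

Set Implicit Arguments.
Unset Strict Implicit.
Unset Printing Implicit Defensive.

Import Order.TTheory GRing.Theory Num.Theory.
Local Open Scope ring_scope.

(* The configuration S_n.  Variables t_1..t_{2n} are indexed by        *)
(* j : 'I_(n+n) with j = i-1; coordinates x_1..x_{n+1} are indexed by   *)
(* k : 'I_(n.+1) with k = (index) - 1.  expo n j k is the k-th entry of *)
(* s_{j+1}.                                                            *)
(*   s_i = e_1 + e_{i+1} + e_{n+1}  (1 <= i < n)                        *)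
(*   s_n = e_1 + e_{n+1}                                                *)
(*   s_i = e_{i+1-n} + e_{n+1}      (n < i < 2n)                        *)
(*   s_{2n} = e_{n+1}                                                   *)
Definition expo (n j k : nat) : nat :=
  nat_of_bool
    (if (j < n.-1)%N then [|| k == 0%N, k == j.+1 | k == n]
     else if j == n.-1 then (k == 0%N) || (k == n)
     else if (j < (n + n).-1)%N then (k == (j.+1 - n)%N) || (k == n)
     else k == n).

Definition svec (n : nat) (j : 'I_(n + n)) : 'X_{1.. n.+1} :=
  [multinom expo n j k | k < n.+1].

Section Toric.
Variable C : nzRingType.

Definition toric_map (n : nat) (f : {mpoly C[n + n]}) : {mpoly C[n.+1]} :=
  comp_mpoly [tuple ('X_[@svec n j] : {mpoly C[n.+1]}) | j < n + n] f.

Definition toric_ideal (n : nat) : {mpoly C[n + n]} -> Prop :=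
  fun f => toric_map f = 0.
End Toric.

Section Initial.
Variable R : realType.
Variable N : nat.
Notation C := (R[i]).
Notation poly := {mpoly C[N]}.

Definition ideal_gen (G : poly -> Prop) : poly -> Prop :=
  fun p => exists (k : nat) (g h : 'I_k -> poly),
      (forall l, G (g l)) /\ p = \sum_(l < k) h l * g l.

Definition same_set (T : Type) (A B : T -> Prop) : Prop :=
  forall x, A x <-> B x.

Definition mweight (w : 'cV[R]_N) (m : 'X_{1.. N}) : R :=
  \sum_(l < N) w l 0 * (m l)%:R.

Definition in_form (w : 'cV[R]_N) (f : poly) : poly :=
  \sum_(m <- msupp f | all (fun m' => mweight w m' <= mweight w m) (msupp f))
     f@_m *: 'X_[m].

Definition init_ideal (w : 'cV[R]_N) (I : poly -> Prop) : poly -> Prop :=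
  ideal_gen (fun g => exists f, I f /\ g = in_form w f).

(* monomial (term) orders on the monomials 'X_{1..N}, given by the strict
   relation lt: strict total order, compatible with multiplication, and
   with 1 as the least monomial (hence a well-order, by Dickson). *)
Definition monomial_order (lt : rel 'X_{1.. N}) : Prop :=
  [/\ (forall a, ~~ lt a a),
      (forall a b c, lt a b -> lt b c -> lt a c),
      (forall a b, a != b -> lt a b || lt b a),
      (forall a b c, lt a b -> lt (a + c)%MM (b + c)%MM)
    & (forall a, a != 0%MM -> lt 0%MM a)].

Definition in_form_lt (w : 'cV[R]_N) (lt : rel 'X_{1.. N}) (f g : poly)
  : Prop :=
  exists m, [/\ m \in msupp f,
    (forall m', m' \in msupp f -> m' != m ->
       (mweight w m' < mweight w m) ||
       ((mweight w m' == mweight w m) && lt m' m))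
    & g = f@_m *: 'X_[m]].

Definition init_ideal_lt (w : 'cV[R]_N) (lt : rel 'X_{1.. N})
  (I : poly -> Prop) : poly -> Prop :=
  ideal_gen (fun g => exists f, I f /\ in_form_lt w lt f g).

Definition dotv (a x : 'cV[R]_N) : R := \sum_(l < N) a l 0 * x l 0.

Definition closure (S : 'cV[R]_N -> Prop) : 'cV[R]_N -> Prop :=
  fun x => forall eps : R, 0 < eps ->
    exists y, S y /\ forall l, `|x l 0 - y l 0| < eps.

Definition conv (T : finType) (pts : T -> 'cV[R]_N) : 'cV[R]_N -> Prop :=
  fun x => exists lam : T -> R,
    [/\ (forall t, 0 <= lam t), \sum_t lam t = 1 & x = \sum_t lam t *: pts t].

Definition is_polytope (P : 'cV[R]_N -> Prop) : Prop :=
  exists (k : nat) (pts : 'I_k -> 'cV[R]_N), same_set P (conv pts).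

Definition face_max (P : 'cV[R]_N -> Prop) (a : 'cV[R]_N) : 'cV[R]_N -> Prop :=
  fun x => P x /\ forall y, P y -> dotv a y <= dotv a x.

Definition normal_cone (P : 'cV[R]_N -> Prop) (a : 'cV[R]_N) :
  'cV[R]_N -> Prop :=
  fun b => same_set (face_max P b) (face_max P a).

Definition groebner_cone (I : poly -> Prop) (w : 'cV[R]_N) :
  'cV[R]_N -> Prop :=
  closure (fun w' => same_set (init_ideal w' I) (init_ideal w I)).

Definition gfan_eq_nfan (I : poly -> Prop) (P : 'cV[R]_N -> Prop) : Prop :=
  forall K : 'cV[R]_N -> Prop,
    (exists w, same_set K (groebner_cone I w)) <->
    (exists a, same_set K (closure (normal_cone P a))).

Definition state_polytope (I : poly -> Prop) (P : 'cV[R]_N -> Prop) : Prop :=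
  is_polytope P /\ gfan_eq_nfan I P.

Definition unimod_equiv (P Q : 'cV[R]_N -> Prop) : Prop :=
  exists (M : matrix int N N) (v : matrix int N 1),
    M \in unitmx /\
    same_set Q (fun y => exists x, P x /\
                   y = map_mx intr M *m x + map_mx intr v).
End Initial.

Section Perm.
Variable R : realType.

(* (pi_1, ..., pi_n) with values in {1..n}, pi : 'S_n on 0-based indices *)
Definition perm_vec (n : nat) (s : 'S_n) : 'cV[R]_n :=
  \col_(l < n) ((s l).+1)%:R.

Definition perm_vec_c (n : nat) (s : 'S_n) : 'cV[R]_n :=
  \col_(l < n) (n - s l)%:R.

Definition permutohedron (n : nat) : 'cV[R]_n -> Prop := conv (@perm_vec n).

Definition permutohedron0 (n : nat) : 'cV[R]_(n + n) -> Prop :=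
  fun y => exists x, permutohedron x /\ y = col_mx x 0.

Definition pi_weight (n : nat) (s : 'S_n) : 'cV[R]_(n + n) :=
  col_mx (perm_vec s) (perm_vec_c s).
End Perm.

From Pilot Require Import Defs.
From HB Require Import structures.
From mathcomp Require Import all_boot all_order all_fingroup all_algebra.
From mathcomp Require Import reals complex mpoly.
From mathcomp Require Import zify ring lra.
Import Order.TTheory GRing.Theory Num.Theory.
Local Open Scope ring_scope.

Set Implicit Arguments.
Unset Strict Implicit.
Unset Printing Implicit Defensive.

(* The toric map sends [t^m] to [x^(A m)], and [A m = A m'] iff [m] and [m'] have the same
   column degrees [m_i + m_(n+i)] and the same top degree [m_1 + ... + m_n]; each fiber is
   connected by the swaps [t_k t_(n+l) <-> t_l t_(n+k)].  Such a swap changes the [w]-weight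
   by [d_l - d_k], where [d_i = w_i - w_(n+i)], so [in_w(I)] only depends on the strict order
   that [d] induces on the indices: it is cut out by the vanishing of the coefficient sums
   over the lightest monomials of each fiber.  The maximal face of [conv {(pi, -pi)}] in
   direction [w] is spanned, by the rearrangement inequality, by the permutations sorted by
   [d], so this polytope has the Groebner fan as normal fan, and the shear
   [(x, y) |-> (x, x + y)] maps it onto [Pi_n x {0}].  A tie-breaking monomial order refines
   the order of [d] to a total order, i.e. to a permutation [pi], which the weight
   [(pi, pi^c)] realizes. *)

Lemma leq_ltn_sum (I : finType) (F G : I -> nat) (k : I) :
  (forall i, F i <= G i)%N -> (F k < G k)%N -> (\sum_i F i < \sum_i G i)%N.
Proof.
move=> FG FGk; rewrite (bigD1 k) // [ltnRHS](bigD1 k) //=.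
by rewrite -addSn leq_add // leq_sum.
Qed.

Lemma leq_sum_eq (I : finType) (F G : I -> nat) :
  (forall i, F i <= G i)%N -> (\sum_i F i = \sum_i G i)%N -> F =1 G.
Proof.
move=> FG eqFG i; apply/eqP; rewrite eqn_leq FG leqNgt /=.
by apply/negP => /(leq_ltn_sum FG); rewrite eqFG ltnn.
Qed.

Lemma ler_ltr_sum (R : numDomainType) (I : finType) (F G : I -> R) (k : I) :
  (forall i, F i <= G i) -> F k < G k -> \sum_i F i < \sum_i G i.
Proof.
move=> FG FGk; rewrite (bigD1 k) // [ltRHS](bigD1 k) //=.
by rewrite ltr_leD // ler_sum.
Qed.

Section IdealGen.
Variables (R : realType) (N : nat).
Local Notation poly := {mpoly (R[i])[N]}.
Variable G : poly -> Prop.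

Lemma ideal_gen0 : ideal_gen G 0.
Proof. by exists 0%N, (fun _ => 0), (fun _ => 0); split; [case | rewrite big_ord0]. Qed.

Lemma ideal_genM h g : G g -> ideal_gen G (h * g).
Proof. by move=> Gg; exists 1%N, (fun _ => g), (fun _ => h); rewrite big_ord1. Qed.

Lemma ideal_genD p q : ideal_gen G p -> ideal_gen G q -> ideal_gen G (p + q).
Proof.
move=> [k1 [g1 [h1 [G1 ->]]]] [k2 [g2 [h2 [G2 ->]]]].
exists (k1 + k2)%N, (fun l => match split l with inl a => g1 a | inr b => g2 b end),
  (fun l => match split l with inl a => h1 a | inr b => h2 b end); split.
  by move=> l; case: (split l).
rewrite big_split_ord /=; congr (_ + _); apply: eq_bigr => a _.
  by rewrite (unsplitK (inl _ a)).
by rewrite (unsplitK (inr _ a)).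
Qed.

Lemma ideal_gen_sum (T : eqType) (s : seq T) (F : T -> poly) :
  (forall x, x \in s -> ideal_gen G (F x)) -> ideal_gen G (\sum_(x <- s) F x).
Proof.
elim: s => [|x s IHs] Fs; first by rewrite big_nil; exact: ideal_gen0.
rewrite big_cons; apply: ideal_genD; first by apply: Fs; rewrite mem_head.
by apply: IHs => y ys; apply: Fs; rewrite inE ys orbT.
Qed.

Lemma ideal_gen_ind (P : poly -> Prop) :
  P 0 -> (forall p q, P p -> P q -> P (p + q)) -> (forall h g, G g -> P (h * g)) ->
  forall p, ideal_gen G p -> P p.
Proof.
move=> P0 PD PM p [k [g [h [Gg ->]]]].
by elim/big_ind: _ => // l _; apply: PM.
Qed.

End IdealGen.

Section CoeffSum.
Variables (K : comNzRingType) (N : nat).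
Local Notation poly := {mpoly K[N]}.
Implicit Types (P : pred 'X_{1.. N}) (p q : poly).

Definition coeff_sum P p : K := \sum_(m <- msupp p | P m) p@_m.

Lemma coeff_sumE P p s : uniq s -> {subset msupp p <= s} ->
  coeff_sum P p = \sum_(m <- s | P m) p@_m.
Proof.
move=> s_uniq ps; symmetry.
rewrite (bigID (mem (msupp p))) /= [X in _ + X]big1 ?addr0; last first.
  by move=> m /andP [_ /memN_msupp_eq0].
rewrite (eq_bigl (fun m => (m \in msupp p) && P m)) => [|m]; last by rewrite andbC.
rewrite -big_filter_cond; apply: perm_big; apply: uniq_perm.
- by rewrite filter_uniq.
- exact: msupp_uniq.
- by move=> m; rewrite mem_filter; apply/andP/idP => [[]//|mp]; split => //; apply: ps.
Qed.

Lemma coeff_sum0 P : coeff_sum P 0 = 0.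
Proof. by rewrite /coeff_sum msupp0 big_nil. Qed.

Lemma coeff_sumD P p q : coeff_sum P (p + q) = coeff_sum P p + coeff_sum P q.
Proof.
pose s := undup (msupp p ++ msupp q).
have s_uniq : uniq s by apply: undup_uniq.
rewrite !(@coeff_sumE _ _ s) //.
- by rewrite -big_split; apply: eq_bigr => m _; rewrite mcoeffD.
- by move=> m mq; rewrite mem_undup mem_cat mq orbT.
- by move=> m mp; rewrite mem_undup mem_cat mp.
- by move=> m /msuppD_le; rewrite mem_undup.
Qed.

Lemma coeff_sumZ P c p : coeff_sum P (c *: p) = c * coeff_sum P p.
Proof.
rewrite (@coeff_sumE _ _ (msupp p)) ?msupp_uniq //; last exact: msuppZ_le.
by rewrite mulr_sumr; apply: eq_bigr => m _; rewrite mcoeffZ.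
Qed.

Lemma coeff_sumB P p q : coeff_sum P (p - q) = coeff_sum P p - coeff_sum P q.
Proof. by rewrite -scaleN1r coeff_sumD coeff_sumZ mulN1r. Qed.

Lemma coeff_sumX P m : coeff_sum P 'X_[m] = (P m)%:R.
Proof. by rewrite /coeff_sum msuppX big_cons big_nil addr0 mcoeffX eqxx; case: (P m). Qed.

Lemma coeff_sum_sum P (T : Type) (r : seq T) (F : T -> poly) :
  coeff_sum P (\sum_(x <- r) F x) = \sum_(x <- r) coeff_sum P (F x).
Proof. exact: (big_morph _ (coeff_sumD P) (coeff_sum0 P)). Qed.

Lemma mcoeffXM (u : 'X_{1.. N}) q x :
  ('X_[u] * q)@_x = if (u <= x)%MM then q@_(x - u)%MM else 0.
Proof.
case: ifP => ux; first by rewrite -{1}(submK ux) addmC mulrC mcoeffMX.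
apply: memN_msupp_eq0; rewrite mulrC (perm_mem (msuppMX _ _)).
by apply/mapP => -[m' _ xE]; move: ux; rewrite xE lem_addr.
Qed.

End CoeffSum.

(* [mpoly] exports an unrelated notation [mweight]. *)
Local Notation mweight := Defs.mweight.

Section InitialForm.
Variables (R : realType) (N : nat).
Local Notation poly := {mpoly (R[i])[N]}.
Implicit Types (w : 'cV[R]_N) (f : poly).

Lemma mweightD w (a b : 'X_{1.. N}) :
  mweight w (a + b)%MM = mweight w a + mweight w b.
Proof.
by rewrite /mweight -big_split; apply: eq_bigr => l _; rewrite mnmDE natrD mulrDr.
Qed.

Lemma mweightU w j : mweight w U_(j)%MM = w j 0.
Proof.
rewrite /mweight (bigD1 j) //= mnm1E eqxx mulr1 big1 ?addr0 // => l lj.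
by rewrite mnm1E eq_sym (negbTE lj) mulr0.
Qed.

Lemma in_formE w f x : (in_form w f)@_x =
  if all (fun m => mweight w m <= mweight w x) (msupp f) then f@_x else 0.
Proof.
rewrite /in_form raddf_sum /=.
under eq_bigr do rewrite mcoeffZ mcoeffX.
rewrite big_mkcond /=; have [xf|xNf] := boolP (x \in msupp f).
  rewrite (bigD1_seq x) //= eqxx mulr1 big1 ?addr0 // => m mx.
  by case: ifP => // _; rewrite (negbTE mx) mulr0.
rewrite big1_seq; first by case: ifP => //; rewrite (memN_msupp_eq0 xNf).
move=> m /= mf; case: ifP => // _; case: eqP => [mx|]; last by rewrite mulr0.
by move: xNf; rewrite -mx mf.
Qed.

Lemma in_formXM w u f : in_form w ('X_[u] * f) = 'X_[u] * in_form w f.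
Proof.
apply/mpolyP => x; rewrite in_formE !mcoeffXM.
have [ux|] := boolP (u <= x)%MM; last by case: ifP.
rewrite in_formE mulrC (eq_all_r (perm_mem (msuppMX _ _))) all_map.
rewrite -{1}(submK ux) addmC; congr (if _ then _ else _); apply: eq_all => m /=.
by rewrite !mweightD lerD2l.
Qed.

Lemma in_form_id w f c :
  (forall m, m \in msupp f -> mweight w m = c) -> in_form w f = f.
Proof.
move=> wf; apply/mpolyP => x; rewrite in_formE.
have [xf|xNf] := boolP (x \in msupp f); last by rewrite (memN_msupp_eq0 xNf); case: ifP.
by rewrite (_ : all _ _ = true) //; apply/allP => m mf; rewrite !wf.
Qed.

Lemma in_form_binom w (m x : 'X_{1.. N}) : mweight w x < mweight w m ->
  in_form w ('X_[m] - 'X_[x]) = 'X_[m].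
Proof.
move=> xm; have x_neq_m : x != m by apply: contraTneq xm => ->; rewrite ltxx.
apply/mpolyP => y; rewrite in_formE mcoeffB !mcoeffX.
have [<-|m_neq_y] := eqVneq m y.
  rewrite (negbTE x_neq_m) subr0 (_ : all _ _ = true) //.
  apply/allP => z /msuppB_le; rewrite !msuppX !inE => /orP [] /eqP -> //.
  exact: ltW.
have [<-|] := eqVneq x y; last by rewrite subrr; case: ifP.
rewrite (_ : all _ _ = false) //; apply/negbTE/allPn; exists m; last by rewrite -ltNge.
by rewrite mcoeff_msupp mcoeffB !mcoeffX eqxx (negbTE x_neq_m) subr0 oner_neq0.
Qed.

End InitialForm.

Section MonomialOrder.
Variables (N : nat) (lt : rel 'X_{1.. N}).
Hypothesis lt_mo : monomial_order lt.

Lemma mo_irr a : lt a a = false.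
Proof. by case: lt_mo => irr _ _ _ _; apply/negbTE. Qed.

Lemma mo_trans a b c : lt a b -> lt b c -> lt a c.
Proof. by case: lt_mo => _ tr _ _ _; apply: tr. Qed.

Lemma mo_total a b : a != b -> lt a b || lt b a.
Proof. by case: lt_mo => _ _ tot _ _; apply: tot. Qed.

Lemma mo_addr a b c : lt a b -> lt (a + c)%MM (b + c)%MM.
Proof. by case: lt_mo => _ _ _ add _; apply: add. Qed.

Lemma mo_addl a b c : lt a b -> lt (c + a)%MM (c + b)%MM.
Proof. by rewrite ![(c + _)%MM]addmC; apply: mo_addr. Qed.

Lemma mo_cancelr a b c : lt (a + c)%MM (b + c)%MM -> lt a b.
Proof.
move=> abc; have [ab|a_neq_b] := eqVneq a b; first by move: abc; rewrite ab mo_irr.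
case/orP: (mo_total a_neq_b) => // ba.
by have := mo_trans abc (mo_addr c ba); rewrite mo_irr.
Qed.

End MonomialOrder.

Lemma perm_of_strict_total n (r : rel 'I_n) : irreflexive r -> transitive r ->
  (forall i j, i != j -> r i j || r j i) ->
  exists s : 'S_n, forall i j, (s i < s j)%N = r i j.
Proof.
move=> irr tr tot; pose rank i := #|[set j | r j i]|.
have rank_mono i j : r i j -> (rank i < rank j)%N.
  move=> rij; apply: proper_card; apply/properP; split.
    by apply/subsetP => k; rewrite !inE => rki; apply: tr rki rij.
  by exists i; rewrite !inE ?irr.
have rankE i j : (rank i < rank j)%N = r i j.
  apply/idP/idP => [|/rank_mono //]; have [->|/tot] := eqVneq i j; first by rewrite ltnn.
  by case/orP => // /rank_mono ji ij; move: (ltn_trans ij ji); rewrite ltnn.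
have rank_lt i : (rank i < n)%N.
  rewrite -[ltnRHS]card_ord; apply: proper_card; apply/properP.
  by split; [apply/subsetP | exists i; rewrite ?inE ?irr].
have rank_inj : injective (fun i => Ordinal (rank_lt i)).
  move=> i j /(congr1 val) /= rij; apply/eqP/negPn/negP => /tot.
  by case/orP => /rank_mono; rewrite rij ltnn.
by exists (perm rank_inj) => i j; rewrite !permE /= rankE.
Qed.

Lemma perm_of_lex n (R : realDomainType) (d : 'I_n -> R) (t : rel 'I_n) :
  irreflexive t -> transitive t -> (forall i j, i != j -> t i j || t j i) ->
  exists s : 'S_n, forall i j, (s i < s j)%N = (d i < d j) || (d i == d j) && t i j.
Proof.
move=> irr tr tot; apply: perm_of_strict_total.
- by move=> i; rewrite ltxx eqxx irr.
- move=> j i k /orP [ij|/andP [/eqP ij tij]] /orP [jk|/andP [/eqP jk tjk]].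
  + by rewrite (lt_trans ij jk).
  + by rewrite -jk ij.
  + by rewrite ij jk.
  + by rewrite ij jk eqxx (tr _ _ _ tij tjk) orbT.
- by move=> i j /tot tij; case: ltgtP => //= ->.
Qed.

Section Rearrangement.
Variables (R : realDomainType) (n : nat).
Implicit Types (d : 'I_n -> R) (s : 'S_n).

Definition perm_dot d s : R := \sum_i d i * (s i).+1%:R.

Definition sorted_by d s := forall i j, d i < d j -> (s i < s j)%N.

Lemma perm_eqn s i j : (s i == s j :> nat) = (i == j).
Proof. by rewrite (inj_eq val_inj) (inj_eq perm_inj). Qed.

Lemma sum_perm_leq s a : (\sum_b (s b <= s a) = (s a).+1)%N.
Proof.
rewrite (reindex_inj (@perm_inj _ s^-1)) /=; under eq_bigr do rewrite permKV.
transitivity (\sum_(i < n | i < (s a).+1) 1)%N.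
  by rewrite [RHS]big_mkcond; apply: eq_bigr => i _; rewrite ltnS; case: leqP.
rewrite -(big_ord_widen _ (fun=> 1%N) (ltn_ord (s a))).
by rewrite big_const_ord iter_addn_0 mul1n.
Qed.

(* For [a != b] and [s] sorted by [d], this is [Num.max (d a) (d b)]. *)
Definition pair_term d s a b : R :=
  d a * (s b <= s a)%:R + d b * (s a <= s b)%:R.

(* [(s a).+1] counts the [b] with [s b <= s a]. *)
Lemma perm_dot_pairs d s : perm_dot d s + perm_dot d s = \sum_a \sum_b pair_term d s a b.
Proof.
have -> : perm_dot d s = \sum_a \sum_b d a * (s b <= s a)%:R.
  by apply: eq_bigr => a _; rewrite -mulr_sumr -natr_sum sum_perm_leq.
rewrite [X in _ + X]exchange_big -big_split /=.
by apply: eq_bigr => a _; rewrite -big_split.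
Qed.

Lemma pair_term_le d s s' a b : sorted_by d s -> pair_term d s' a b <= pair_term d s a b.
Proof.
move=> ds; rewrite /pair_term; have [->|a_neq_b] := eqVneq a b; first by rewrite !leqnn.
have s'_ab := a_neq_b; rewrite -(perm_eqn s') in s'_ab; rewrite -(perm_eqn s) in a_neq_b.
have [s'ab|s'ab|/eqP] := ltngtP (s' a) (s' b); last by rewrite (negbTE s'_ab).
all: have [sab|sab|/eqP] := ltngtP (s a) (s b); last by rewrite (negbTE a_neq_b).
all: rewrite ?mulr0 ?mulr1 ?addr0 ?add0r //.
all: by rewrite leNgt; apply/negP => /ds /(ltn_trans sab); rewrite ltnn.
Qed.

Lemma pair_term_lt d s s' i j : sorted_by d s -> d i < d j -> (s' j < s' i)%N ->
  pair_term d s' i j < pair_term d s i j.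
Proof.
move=> ds dij s'ji; have sij := ds _ _ dij; rewrite /pair_term.
by rewrite (ltn_geF sij) (ltnW sij) (ltn_geF s'ji) (ltnW s'ji) !mulr0 !mulr1 addr0 add0r.
Qed.

Lemma perm_dot_le d s s' : sorted_by d s -> perm_dot d s' <= perm_dot d s.
Proof.
move=> ds; suff : perm_dot d s' + perm_dot d s' <= perm_dot d s + perm_dot d s by lra.
by rewrite !perm_dot_pairs; apply: ler_sum => a _; apply: ler_sum => b _; apply: pair_term_le.
Qed.

Lemma perm_dot_lt d s s' i j : sorted_by d s -> d i < d j -> (s' j < s' i)%N ->
  perm_dot d s' < perm_dot d s.
Proof.
move=> ds dij s'ji.
suff : perm_dot d s' + perm_dot d s' < perm_dot d s + perm_dot d s by lra.
rewrite !perm_dot_pairs; apply: (ler_ltr_sum (k := i)).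
  by move=> a; apply: ler_sum => b _; apply: pair_term_le.
apply: (ler_ltr_sum (k := j)); first by move=> b; apply: pair_term_le.
exact: pair_term_lt.
Qed.

Lemma exists_sorted_by d : exists s, sorted_by d s.
Proof.
have [|||s sE] := perm_of_lex d (t := fun i j : 'I_n => (i < j)%N).
- by move=> i; rewrite ltnn.
- by move=> j i k; apply: ltn_trans.
- by move=> i j; rewrite neq_ltn.
by exists s => i j dij; rewrite sE dij.
Qed.

Lemma perm_dot_maxP d s : (forall s', perm_dot d s' <= perm_dot d s) <-> sorted_by d s.
Proof.
split=> [dmax i j dij|ds s']; last exact: perm_dot_le.
have [s0 ds0] := exists_sorted_by d.
have : (s i : nat) != s j by rewrite perm_eqn; apply: contraTneq dij => ->; rewrite ltxx.
case: ltngtP => // sji _.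
by have := perm_dot_lt ds0 dij sji; rewrite ltNge dmax.
Qed.

End Rearrangement.

Lemma sum_eq0_other (T : eqType) (V : zmodType) (s : seq T) (P : pred T) (F : T -> V) x :
  uniq s -> x \in s -> P x -> F x != 0 -> \sum_(y <- s | P y) F y = 0 ->
  exists y, [/\ y \in s, y != x, P y & F y != 0].
Proof.
move=> s_uniq xs Px Fx; rewrite big_mkcond (bigD1_seq x) //= Px.
have [/hasP [y ys /and3P [yx Py Fy]] _|/hasPn others] :=
  boolP (has (fun y => [&& y != x, P y & F y != 0]) s); first by exists y.
rewrite big1_seq ?addr0 => [Fx0|y /andP [yx ys]]; first by rewrite Fx0 eqxx in Fx.
by case: ifP => // Py; apply/eqP; apply: contraNT (others y ys) => Fy; rewrite yx Py Fy.
Qed.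

Lemma size_msupp_elim (K : nzRingType) N (p g : {mpoly K[N]}) m :
  m \in msupp p -> g@_m = 1 -> {subset msupp g <= msupp p} ->
  (size (msupp (p - p@_m *: g)) < size (msupp p))%N.
Proof.
move=> mp gm gp; set q := p - p@_m *: g.
have qp : {subset msupp q <= rem m (msupp p)}.
  move=> y yq; have y_neq_m : y != m.
    by apply: contraTneq yq => ->; rewrite mcoeff_msupp mcoeffB mcoeffZ gm mulr1 subrr eqxx.
  rewrite (rem_filter _ (msupp_uniq p)) mem_filter /= y_neq_m.
  by have := msuppB_le yq; rewrite mem_cat => /orP [// | /msuppZ_le /gp].
have := uniq_leq_size (msupp_uniq q) qp; rewrite size_rem //.
by move/leq_ltn_trans; apply; rewrite ltn_predL; case: (msupp p) mp.
Qed.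

Section ToricSn.
Variable n : nat.
Local Notation mn := 'X_{1.. n + n}.
Local Notation lsh i := (lshift n (i : 'I_n)).
Local Notation rsh i := (rshift n (i : 'I_n)).
Implicit Types (m x c : mn) (i k l : 'I_n).

Lemma mnm_split_eq x m : (forall i, x (lsh i) = m (lsh i)) ->
  (forall i, x (rsh i) = m (rsh i)) -> x = m.
Proof.
by move=> eql eqr; apply/mnmP => j; case: (split_ordP j) => i ->; [apply: eql | apply: eqr].
Qed.

Definition top_deg m : nat := \sum_i m (lsh i).

Definition col_deg m i : nat := m (lsh i) + m (rsh i).

Definition same_fiber m x : bool :=
  [forall i, col_deg m i == col_deg x i] && (top_deg m == top_deg x).

(* The monomial [t_(k+1) t_(n+l+1)] in the numbering [t_1, ..., t_(2n)] of the variables. *)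
Definition tu k l : mn := (U_(lsh k) + U_(rsh l))%MM.

Lemma tu_lsh k l i : tu k l (lsh i) = (k == i).
Proof. by rewrite mnmDE !mnm1E (inj_eq (@lshift_inj _ _)) eq_rlshift addn0. Qed.

Lemma tu_rsh k l i : tu k l (rsh i) = (l == i).
Proof. by rewrite mnmDE !mnm1E (inj_eq (@rshift_inj _ _)) eq_lrshift. Qed.

Lemma tu_le m k l : (0 < m (lsh k))%N -> (0 < m (rsh l))%N -> (tu k l <= m)%MM.
Proof.
move=> mk ml; apply/mnm_lepP => j; case: (split_ordP j) => i ->.
  by rewrite tu_lsh; case: eqP => // <-.
by rewrite tu_rsh; case: eqP => // <-.
Qed.

Lemma same_fiberP m x : reflect ((forall i, col_deg m i = col_deg x i) /\ top_deg m = top_deg x)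
  (same_fiber m x).
Proof.
apply: (iffP andP) => [[/forallP colE /eqP ->]|[colE ->]]; split=> //.
  by move=> i; apply/eqP/colE.
by apply/forallP => i; rewrite colE.
Qed.

Lemma same_fiber_refl m : same_fiber m m.
Proof. exact/same_fiberP. Qed.

Lemma same_fiber_sym m x : same_fiber m x -> same_fiber x m.
Proof. by move/same_fiberP => [colE topE]; apply/same_fiberP; split=> // i; rewrite colE. Qed.

Lemma same_fiber_trans x m y : same_fiber m x -> same_fiber x y -> same_fiber m y.
Proof.
move/same_fiberP=> [colE1 topE1] /same_fiberP [colE2 topE2].
by apply/same_fiberP; split=> [i|]; rewrite ?colE1 ?colE2 ?topE1.
Qed.

Lemma col_degD a b i : col_deg (a + b)%MM i = (col_deg a i + col_deg b i)%N.
Proof. rewrite /col_deg !mnmDE; lia. Qed.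

Lemma top_degD a b : top_deg (a + b)%MM = (top_deg a + top_deg b)%N.
Proof. by rewrite /top_deg -big_split; apply: eq_bigr => i _; rewrite mnmDE. Qed.

Lemma same_fiberD a b c : same_fiber a b -> same_fiber (a + c)%MM (b + c)%MM.
Proof.
move/same_fiberP=> [colE topE]; apply/same_fiberP.
by split=> [i|]; rewrite ?col_degD ?top_degD ?colE ?topE.
Qed.

Lemma top_deg_tu k l : top_deg (tu k l) = 1%N.
Proof.
rewrite /top_deg (eq_bigr _ (fun i _ => tu_lsh k l i)) (bigD1 k) //= eqxx big1 // => i.
by rewrite eq_sym => /negbTE ->.
Qed.

Lemma same_fiber_swap c k l : same_fiber (c + tu k l)%MM (c + tu l k)%MM.
Proof.
rewrite ![(c + _)%MM]addmC; apply: same_fiberD; apply/same_fiberP.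
split; last by rewrite !top_deg_tu.
by move=> i; rewrite /col_deg !tu_lsh !tu_rsh addnC.
Qed.

Lemma swap_split m k l : (0 < m (lsh k))%N -> (0 < m (rsh l))%N ->
  same_fiber (m - tu k l + tu l k)%MM m.
Proof. by move=> mk ml; rewrite -{2}(submK (tu_le mk ml)) same_fiber_sym ?same_fiber_swap. Qed.

Definition toric_expo m : 'X_{1.. n.+1} :=
  [multinom (\sum_(j < n + n) m j * expo n j k)%N | k < n.+1].

Ltac expo_case := rewrite /expo /=;
  repeat (case: ifP => /= ?); repeat (case: eqP => /= ?); try lia.

Lemma expo_lsh0 i : expo n (lsh i) 0 = 1%N.
Proof. have := ltn_ord i; expo_case. Qed.
Lemma expo_rsh0 i : expo n (rsh i) 0 = 0%N.
Proof. have := ltn_ord i; expo_case. Qed.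
Lemma expo_last (j : 'I_(n + n)) : expo n j n = 1%N.
Proof. have := ltn_ord j; expo_case. Qed.
Lemma expo_lshS i (k : nat) : (k.+1 < n)%N -> expo n (lsh i) k.+1 = (i == k :> nat).
Proof. have := ltn_ord i; expo_case. Qed.
Lemma expo_rshS i (k : nat) : (k.+1 < n)%N -> expo n (rsh i) k.+1 = (i == k :> nat).
Proof. have := ltn_ord i; expo_case. Qed.

Lemma toric_expoE m (k : 'I_n.+1) : toric_expo m k = (\sum_(j < n + n) m j * expo n j k)%N.
Proof. by rewrite mnmE. Qed.

Lemma toric_expo_top m (k : 'I_n.+1) : k = 0%N :> nat -> toric_expo m k = top_deg m.
Proof.
move=> k0; rewrite toric_expoE big_split_ord /= k0.
rewrite [X in (_ + X)%N]big1 ?addn0 => [|i _]; last by rewrite expo_rsh0 muln0.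
by apply: eq_bigr => i _; rewrite expo_lsh0 muln1.
Qed.

Lemma toric_expo_deg m (k : 'I_n.+1) : k = n :> nat -> toric_expo m k = mdeg m.
Proof.
by move=> kn; rewrite toric_expoE kn mdegE; apply: eq_bigr => j _; rewrite expo_last muln1.
Qed.

Lemma toric_expo_col m (k : 'I_n.+1) i : k = i.+1 :> nat -> (i.+1 < n)%N ->
  toric_expo m k = col_deg m i.
Proof.
move=> ki iSn; rewrite toric_expoE ki big_split_ord.
have sum_i (F G : 'I_n -> nat) : (forall j, G j = (j == i :> nat)) ->
    (\sum_j F j * G j = F i)%N.
  move=> GE; rewrite (bigD1 i) //= GE eqxx muln1 big1 ?addn0 // => j /negbTE ji.
  by rewrite GE (inj_eq val_inj) ji muln0.
by congr (_ + _)%N; apply: sum_i => j; [apply: expo_lshS | apply: expo_rshS].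
Qed.

Lemma mdeg_col_deg m : mdeg m = (\sum_i col_deg m i)%N.
Proof. by rewrite /col_deg big_split mdegE big_split_ord. Qed.

(* The coordinates of [toric_expo m] are the top degree, the first [n - 1] column
   degrees and the total degree, which is the sum of all [n] column degrees. *)
Lemma toric_expo_eq m x : (toric_expo m == toric_expo x) = same_fiber m x.
Proof.
have toric_col i (iSn : (i.+1 < n)%N) y :
    toric_expo y (@Ordinal n.+1 i.+1 (ltnW iSn)) = col_deg y i.
  exact: toric_expo_col.
apply/eqP/same_fiberP => [mx|[colE topE]]; last first.
  apply/mnmP => k; have [k0|k_neq0] := eqVneq (k : nat) 0%N.
    by rewrite !toric_expo_top.
  have [kn|k_neq_n] := eqVneq (k : nat) n.
    by rewrite !toric_expo_deg // !mdeg_col_deg; apply: eq_bigr => i _.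
  have kn : (k.-1 < n)%N by have := ltn_ord k; lia.
  by rewrite !(@toric_expo_col _ k (Ordinal kn)) //= ?prednK ?lt0n //; lia.
have colE i : (i.+1 < n)%N -> col_deg m i = col_deg x i.
  by move=> iSn; rewrite -!toric_col mx.
split; last by rewrite -!(@toric_expo_top _ ord0) // mx.
move=> i; have [/colE //|] := ltnP i.+1 n; rewrite leqNgt => /negbTE iSn.
have := congr1 (fun u : 'X_{1.. n.+1} => u ord_max) mx.
rewrite /= !toric_expo_deg // !mdeg_col_deg (bigD1 i) // [X in _ = X -> _](bigD1 i) //=.
rewrite (eq_bigr (col_deg x)) => [/addIn //|j ji]; apply: colE.
have := ltn_ord j; have := ltn_ord i; have : (j : nat) != i by [].
by move: iSn; lia.
Qed.

Section ToricIdeal.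
Variable K : comNzRingType.
Local Notation poly := {mpoly K[n + n]}.

Lemma toric_mapX m : toric_map ('X_[m] : poly) = 'X_[toric_expo m].
Proof.
rewrite /toric_map comp_mpolyX.
under eq_bigr do rewrite tnth_mktuple.
rewrite mprodXnE; congr 'X_[_]; apply/mnmP => k.
by rewrite mnm_sumE toric_expoE; apply: eq_bigr => j _; rewrite mulmnE mnmE mulnC.
Qed.

Lemma toric_mapE (f : poly) :
  toric_map f = \sum_(m <- msupp f) f@_m *: 'X_[toric_expo m].
Proof. by rewrite /toric_map comp_mpolyEX; apply: eq_bigr => m _; rewrite -toric_mapX. Qed.

Lemma toric_ideal_fiber_sum (f : poly) m0 : toric_ideal f ->
  \sum_(m <- msupp f | same_fiber m m0) f@_m = 0.
Proof.
rewrite /toric_ideal toric_mapE => /(congr1 (mcoeff (toric_expo m0))).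
rewrite mcoeff0 raddf_sum /= => {2}<-; rewrite big_mkcond; apply: eq_bigr => m _.
by rewrite mcoeffZ mcoeffX toric_expo_eq; case: ifP; rewrite ?mulr1 ?mulr0.
Qed.

Lemma toric_ideal_binom m x : same_fiber m x -> toric_ideal ('X_[m] - 'X_[x] : poly).
Proof.
move=> mx; rewrite /toric_ideal /toric_map raddfB /= -!/(toric_map _) !toric_mapX.
by move: mx; rewrite -toric_expo_eq => /eqP ->; rewrite subrr.
Qed.

Lemma toric_idealMl (h f : poly) : toric_ideal f -> toric_ideal (h * f).
Proof. by rewrite /toric_ideal /toric_map rmorphM /= => ->; rewrite mulr0. Qed.

End ToricIdeal.

Definition lsh_dist m x : nat := \sum_i (x (lsh i) - m (lsh i)).

(* Within a fiber, one reaches [m] from any [x] by swaps [c + tu k l -> c + tu l k]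
   each of which decreases the distance [lsh_dist m]. *)
Lemma same_fiber_ind m (Q : mn -> Prop) : Q m ->
  (forall c k l, k != l -> (0 < m (lsh l))%N -> (0 < m (rsh k))%N ->
     Q (c + tu l k)%MM -> Q (c + tu k l)%MM) ->
  forall x, same_fiber x m -> Q x.
Proof.
move=> Qm Qswap x; have [N] := ubnP (lsh_dist m x); elim: N x => // N IHN x.
move=> dist_x fib_x; have /same_fiberP [colE topE] := fib_x.
have [/existsP [k mk]|] := boolP [exists k, m (lsh k) < x (lsh k)]%N; last first.
  rewrite negb_exists => /forallP x_le_m.
  have x_le_m' i : (x (lsh i) <= m (lsh i))%N by rewrite leqNgt x_le_m.
  have lshE := leq_sum_eq x_le_m' topE.
  suff -> : x = m by [].
  by apply: mnm_split_eq => // i; move: (colE i); rewrite /col_deg lshE; lia.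
have [l ml] : exists l, (x (lsh l) < m (lsh l))%N.
  apply/existsP; apply: contraT; rewrite negb_exists => /forallP m_le_x.
  have := @leq_ltn_sum _ (fun i => m (lsh i)) (fun i => x (lsh i)) k.
  rewrite -/(top_deg m) -/(top_deg x) topE ltnn.
  by apply => // i; rewrite leqNgt m_le_x.
have k_neq_l : k != l by apply: contraTneq mk => ->; rewrite -leqNgt ltnW.
have := colE k; have := colE l; rewrite /col_deg => colEl colEk.
have xk : (0 < x (lsh k))%N by lia.
have xl : (0 < x (rsh l))%N by lia.
rewrite -(submK (tu_le xk xl)); apply: Qswap => //; try lia.
apply: IHN; last by apply: same_fiber_trans fib_x; exact: swap_split.
rewrite -ltnS; apply: leq_trans dist_x; rewrite ltnS /lsh_dist.
apply: (@leq_ltn_sum _ _ (fun i => x (lsh i) - m (lsh i))%N k) => [i|].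
  rewrite mnmDE mnmBE !tu_lsh; have [<-|_] := eqVneq l i; last by rewrite addn0 leq_sub2r ?leq_subr.
  by rewrite (negbTE k_neq_l) /=; lia.
by rewrite mnmDE mnmBE !tu_lsh eqxx eq_sym (negbTE k_neq_l) /=; lia.
Qed.

(* [r l k] means that trading [tu k l] for [tu l k] is an improvement. *)
Definition swap_minimal (r : rel 'I_n) m : bool :=
  [forall k, forall l, ~~ [&& 0 < m (lsh k), 0 < m (rsh l) & r l k]%N].

Lemma swap_minimalP r m : reflect
  (forall k l, (0 < m (lsh k))%N -> (0 < m (rsh l))%N -> ~~ r l k) (swap_minimal r m).
Proof.
apply: (iffP forallP) => [min_m k l mk ml|min_m k].
  by have := forallP (min_m k) l; rewrite mk ml.
by apply/forallP => l; apply/negP => /and3P [mk ml]; apply/negP; apply: min_m.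
Qed.

Lemma swap_minimalPn r m : ~~ swap_minimal r m ->
  exists c k l, [/\ m = (c + tu k l)%MM, r l k & same_fiber (c + tu l k)%MM m].
Proof.
rewrite negb_forall => /existsP [k]; rewrite negb_forall => /existsP [l].
rewrite negbK => /and3P [mk ml rlk].
by exists (m - tu k l)%MM, k, l; rewrite submK ?tu_le ?swap_split.
Qed.

Lemma eq_swap_minimal r1 r2 : r1 =2 r2 -> swap_minimal r1 =1 swap_minimal r2.
Proof. by move=> r12 m; apply: eq_forallb => k; apply: eq_forallb => l; rewrite r12. Qed.

Lemma swap_minimal_tu r k l : swap_minimal r (tu k l) = ~~ r l k.
Proof.
apply/swap_minimalP/idP => [|rlk k' l']; first by apply; rewrite ?tu_lsh ?tu_rsh eqxx.
by rewrite tu_lsh tu_rsh; case: eqP => // <-; case: eqP => // <-.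
Qed.

End ToricSn.

Section InitialIdeal.
Variables (R : realType) (n : nat).
Local Notation mn := 'X_{1.. n + n}.
Local Notation lsh i := (lshift n (i : 'I_n)).
Local Notation rsh i := (rshift n (i : 'I_n)).
Local Notation poly := {mpoly (R[i])[n + n]}.
Local Notation I := (@toric_ideal (R[i]) n).
Implicit Types (w : 'cV[R]_(n + n)) (m x c : mn) (p : poly).

Definition wdiff w i : R := w (lsh i) 0 - w (rsh i) 0.

Definition wlt w : rel 'I_n := fun l k => wdiff w l < wdiff w k.

Lemma mweight_swap w c k l :
  mweight w (c + tu l k)%MM = mweight w (c + tu k l)%MM + (wdiff w l - wdiff w k).
Proof. rewrite !mweightD !mweightU /wdiff; ring. Qed.

Lemma swap_minimal_wltP w m :
  swap_minimal (wlt w) m <-> forall x, same_fiber x m -> mweight w m <= mweight w x.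
Proof.
split=> [/swap_minimalP min_m | light_m].
  apply: same_fiber_ind => // c k l _ ml mk; have := min_m l k ml mk.
  by rewrite /wlt -leNgt mweight_swap; lra.
apply: contraT => /swap_minimalPn [c [k [l [mE wlk /light_m]]]].
by rewrite mE mweight_swap; move: wlk; rewrite /wlt; lra.
Qed.

Lemma swap_minimal_mweight_eq w m x : swap_minimal (wlt w) m -> same_fiber x m ->
  mweight w x <= mweight w m -> swap_minimal (wlt w) x /\ mweight w x = mweight w m.
Proof.
move=> /swap_minimal_wltP min_m xm xw; have wE : mweight w x = mweight w m.
  by apply/eqP; rewrite eq_le xw min_m.
split=> //; apply/swap_minimal_wltP => y yx; rewrite wE; apply: min_m.
exact: same_fiber_trans yx xm.
Qed.

(* The coefficient sum over the [w]-lightest monomials of the fiber of [m0]; these linear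
   forms cut out [init_ideal w I]. *)
Local Notation light_sum w m0 :=
  (coeff_sum (fun m => same_fiber m m0 && swap_minimal (wlt w) m)).

Lemma light_sum_in_form w m0 g : I g -> light_sum w m0 (in_form w g) = 0.
Proof.
move=> Ig; rewrite (@coeff_sumE _ _ _ _ (msupp g) (msupp_uniq g)); last first.
  by move=> m; rewrite !mcoeff_msupp in_formE; case: ifP; rewrite ?eqxx.
under eq_bigr do rewrite in_formE.
set heavy := fun m => all (fun m' => mweight w m' <= mweight w m) (msupp g).
have [/hasP [m1 m1g /and3P [m1m0 min_m1 heavy_m1]]|] :=
  boolP (has (fun m => [&& same_fiber m m0, swap_minimal (wlt w) m & heavy m]) (msupp g)).
  have fiber_light m : m \in msupp g -> same_fiber m m0 -> swap_minimal (wlt w) m && heavy m.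
    move=> mg mm0; have mm1 : same_fiber m m1.
      exact: same_fiber_trans mm0 (same_fiber_sym m1m0).
    have [-> wE] := swap_minimal_mweight_eq min_m1 mm1 (allP heavy_m1 m mg).
    by apply/allP => m' m'g; rewrite wE (allP heavy_m1 m' m'g).
  rewrite -[RHS](toric_ideal_fiber_sum m0 Ig) big_seq_cond [RHS]big_seq_cond.
  apply: eq_big => [m|m /andP [mg /andP [mm0 _]]]; last first.
    by case/andP: (fiber_light m mg mm0) => _; rewrite /heavy => ->.
  have [mg|] //= := boolP (m \in msupp g); have [mm0|] //= := boolP (same_fiber m m0).
  by have /andP [] := fiber_light m mg mm0.
move=> /hasPn no_light; rewrite big1_seq // => m /andP [/andP [mm0 min_m] mg].
by have := no_light m mg; rewrite mm0 min_m /heavy /= => /negbTE ->.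
Qed.

Lemma light_sum_init_ideal w p : init_ideal w I p -> forall m0, light_sum w m0 p = 0.
Proof.
move=> Ip m0; apply: (ideal_gen_ind (P := fun p => light_sum w m0 p = 0)) Ip.
- exact: coeff_sum0.
- by move=> q r qE rE; rewrite coeff_sumD qE rE addr0.
move=> h _ [f [If ->]]; rewrite (mpolyE h) mulr_suml coeff_sum_sum big1 // => u _.
by rewrite -scalerAl coeff_sumZ -in_formXM (light_sum_in_form _ _ (toric_idealMl _ If)) mulr0.
Qed.

Lemma light_sum0_witness w p m : (forall m0, light_sum w m0 p = 0) -> m \in msupp p ->
  exists g, [/\ I g, (in_form w g)@_m = 1 & {subset msupp (in_form w g) <= msupp p}].
Proof.
move=> p_light mp; have pm : p@_m != 0 by rewrite -mcoeff_msupp.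
have [min_m|/swap_minimalPn [c [k [l [mE wlk swap_fib]]]]] := boolP (swap_minimal (wlt w) m).
  have m_light : same_fiber m m && swap_minimal (wlt w) m by rewrite same_fiber_refl.
  have [x [xp x_neq_m /andP [xm min_x] _]] :=
    sum_eq0_other (msupp_uniq p) mp m_light pm (p_light m).
  have /swap_minimal_wltP light_m := min_m; have /swap_minimal_wltP light_x := min_x.
  have wE : mweight w x = mweight w m.
    by apply/eqP; rewrite eq_le (light_m _ xm) (light_x _ (same_fiber_sym xm)).
  exists ('X_[m] - 'X_[x]); rewrite (@in_form_id _ _ _ _ (mweight w m)); last first.
    by move=> y /msuppB_le; rewrite !msuppX !inE => /orP [] /eqP ->.
  split; first exact/toric_ideal_binom/same_fiber_sym.
    by rewrite mcoeffB !mcoeffX eqxx (negbTE x_neq_m) subr0.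
  by move=> y /msuppB_le; rewrite !msuppX !inE => /orP [] /eqP ->.
exists ('X_[m] - 'X_[c + tu l k]); rewrite in_form_binom; last first.
  by rewrite mE mweight_swap; move: wlk; rewrite /wlt; lra.
split; first exact/toric_ideal_binom/same_fiber_sym.
  by rewrite mcoeffX eqxx.
by move=> y; rewrite msuppX inE => /eqP ->.
Qed.

Lemma init_ideal_light_sum w p : (forall m0, light_sum w m0 p = 0) -> init_ideal w I p.
Proof.
have [N] := ubnP (size (msupp p)); elim: N p => // N IHN p supp_p p_light.
have [->|[m mp]] : p = 0 \/ exists m, m \in msupp p.
- case E: (msupp p) => [|m s]; [left; exact: msuppnil0 | right; exists m].
  exact: mem_head.
- exact: ideal_gen0.
have [g [Ig gm gp]] := light_sum0_witness p_light mp.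
have -> : p = (p - p@_m *: in_form w g) + (p@_m)%:MP * in_form w g.
  by rewrite mul_mpolyC subrK.
apply: ideal_genD; last by apply: ideal_genM; exists g.
apply: IHN => [|m0]; first by apply: leq_trans (size_msupp_elim mp gm gp) _; rewrite -ltnS.
by rewrite coeff_sumB coeff_sumZ p_light light_sum_in_form // mulr0 subr0.
Qed.

Lemma init_idealP w p : init_ideal w I p <-> forall m0, light_sum w m0 p = 0.
Proof. by split; [apply: light_sum_init_ideal | apply: init_ideal_light_sum]. Qed.

Lemma init_idealX w m : init_ideal w I 'X_[m] <-> ~~ swap_minimal (wlt w) m.
Proof.
rewrite init_idealP; split => [/(_ m)|not_min m0]; rewrite coeff_sumX.
  by rewrite same_fiber_refl; case: swap_minimal => // /eqP; rewrite oner_eq0.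
by rewrite (negbTE not_min) andbF.
Qed.

Lemma init_ideal_wlt w1 w2 i j : same_set (init_ideal w1 I) (init_ideal w2 I) ->
  wlt w1 i j -> wlt w2 i j.
Proof.
move=> eq12 w1ij; have : init_ideal w1 I 'X_[tu j i].
  by apply/init_idealX; rewrite swap_minimal_tu w1ij.
by move/eq12/init_idealX; rewrite swap_minimal_tu negbK.
Qed.

Lemma init_ideal_eqP w w' : same_set (init_ideal w' I) (init_ideal w I) <-> wlt w' =2 wlt w.
Proof.
split=> [eqI i j|eqw p]; last first.
  have E m0 : light_sum w' m0 p = light_sum w m0 p.
    by apply: eq_bigl => m; rewrite (eq_swap_minimal eqw).
  by rewrite !init_idealP; split=> p0 m0; rewrite ?E // -E.
by apply/idP/idP; apply: init_ideal_wlt => // p; rewrite eqI.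
Qed.

End InitialIdeal.

Lemma dotv_sum (R : realType) N (T : finType) (b : 'cV[R]_N) (lam : T -> R) pts :
  dotv b (\sum_t lam t *: pts t) = \sum_t lam t * dotv b (pts t).
Proof.
rewrite /dotv; under eq_bigr do rewrite summxE mulr_sumr.
rewrite exchange_big /=; apply: eq_bigr => t _; rewrite mulr_sumr.
by apply: eq_bigr => l _; rewrite mxE; ring.
Qed.

Lemma closure_same_set (R : realType) N (S S' : 'cV[R]_N -> Prop) :
  same_set S S' -> same_set (Defs.closure S) (Defs.closure S').
Proof.
move=> SS' x; split=> x_cl eps eps_gt0; have [y [Sy xy]] := x_cl eps eps_gt0.
  by exists y; split; first exact/SS'.
by exists y; split; first exact/SS'.
Qed.

Lemma sum_col_mx (R : nzRingType) (T : finType) m1 m2 (f : T -> 'cV[R]_m1) (g : T -> 'cV[R]_m2) :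
  \sum_t col_mx (f t) (g t) = col_mx (\sum_t f t) (\sum_t g t).
Proof.
apply: (big_rec3 (fun a b c => a = col_mx b c)); first by rewrite col_mx0.
by move=> t a b c _ ->; rewrite add_col_mx.
Qed.

Section PmPermutohedron.
Variables (R : realType) (n : nat).
Local Notation vec := 'cV[R]_(n + n).
Implicit Types (a b : vec) (s : 'S_n).

Definition pm_vertex s : vec := col_mx (perm_vec R s) (- perm_vec R s).

Definition pm_permutohedron : vec -> Prop := conv pm_vertex.

Lemma dotv_pm_vertex b s : dotv b (pm_vertex s) = perm_dot (wdiff b) s.
Proof.
rewrite /dotv big_split_ord /= /perm_dot -big_split /=; apply: eq_bigr => i _.
by rewrite /pm_vertex col_mxEu col_mxEd !mxE /wdiff; ring.
Qed.

Lemma pm_vertexE s : pm_vertex s = \sum_t (t == s)%:R *: pm_vertex t.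
Proof. by rewrite (bigD1 s) //= eqxx scale1r big1 ?addr0 // => t /negbTE ->; rewrite scale0r. Qed.

Lemma sum_delta s : \sum_t ((t == s)%:R : R) = 1.
Proof. by rewrite (bigD1 s) //= eqxx big1 ?addr0 // => t /negbTE ->. Qed.

Lemma pm_vertex_in s : pm_permutohedron (pm_vertex s).
Proof. by exists (fun t => (t == s)%:R); rewrite -pm_vertexE sum_delta. Qed.

(* A convex combination maximizes [b] iff all the vertices it uses do, and by the
   rearrangement inequality these are the permutations sorted by [wdiff b]. *)
Lemma face_max_pmP b (lam : 'S_n -> R) : (forall t, 0 <= lam t) -> \sum_t lam t = 1 ->
  face_max pm_permutohedron b (\sum_t lam t *: pm_vertex t) <->
  (forall s, 0 < lam s -> sorted_by (wdiff b) s).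
Proof.
move=> lam_ge0 lam1; have [s0 /perm_dot_maxP s0_max] := exists_sorted_by (wdiff b).
set d := perm_dot (wdiff b) in s0_max *.
have dot_le y : pm_permutohedron y -> dotv b y <= d s0.
  move=> [mu [mu_ge0 mu1 ->]]; rewrite dotv_sum -[leRHS]mul1r -mu1 mulr_suml.
  by apply: ler_sum => t _; rewrite dotv_pm_vertex ler_wpM2l.
have gap_ge0 t : 0 <= lam t * (d s0 - d t) by rewrite mulr_ge0 // subr_ge0.
have gapE : \sum_t lam t * (d s0 - d t) = d s0 - dotv b (\sum_t lam t *: pm_vertex t).
  rewrite dotv_sum; under eq_bigr do rewrite mulrBr.
  rewrite sumrB -mulr_suml lam1 mul1r; congr (_ - _).
  by apply: eq_bigr => t _; rewrite dotv_pm_vertex.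
split=> [[_ x_max] s lam_s|lam_sorted].
  have gap0 : \sum_t lam t * (d s0 - d t) = 0.
    apply/eqP; rewrite eq_le sumr_ge0 // andbT gapE subr_le0 /d -dotv_pm_vertex.
    exact/x_max/pm_vertex_in.
  have /eqP := psumr_eq0P (i := s) (fun t _ => gap_ge0 t) gap0 isT.
  rewrite mulf_eq0 (gt_eqF lam_s) subr_eq0 => /eqP s0E.
  by apply/perm_dot_maxP => s'; move: (s0_max s'); rewrite s0E.
split; first by exists lam.
move=> y /dot_le /le_trans; apply; rewrite -subr_le0 -gapE big1 // => t _.
have [->|lam_t] := eqVneq (lam t) 0; first by rewrite mul0r.
have /perm_dot_maxP t_max : sorted_by (wdiff b) t.
  by apply: lam_sorted; rewrite lt_def lam_t lam_ge0.
by apply/eqP; rewrite mulf_eq0 (negbTE lam_t) subr_eq0 eq_le /d t_max s0_max.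
Qed.

Lemma face_max_vertexP b s : face_max pm_permutohedron b (pm_vertex s) <-> sorted_by (wdiff b) s.
Proof.
rewrite pm_vertexE (face_max_pmP _ (fun t => ler0n _ _) (sum_delta s)).
split=> [/(_ s)|s_sorted t]; first by rewrite eqxx ltr01; apply.
by have [->|] := eqVneq t s; rewrite ?ltxx.
Qed.

Lemma eq_sorted_by a b s : wlt b =2 wlt a -> sorted_by (wdiff b) s <-> sorted_by (wdiff a) s.
Proof.
move=> eqba; split=> s_sorted i j dij; apply: s_sorted; have := eqba i j; rewrite /wlt dij.
  by move=> ->.
by move=> <-.
Qed.

(* If [wdiff a j <= wdiff a i], some vertex maximizing [a] puts [j] before [i]. *)
Lemma face_max_wlt a b i j :
  same_set (face_max pm_permutohedron b) (face_max pm_permutohedron a) -> wlt b i j -> wlt a i j.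
Proof.
move=> eqF wbij; apply: contraT; rewrite /wlt -leNgt => waji.
have i_neq_j : i != j by apply: contraTneq wbij => ->; rewrite /wlt ltxx.
pose key u := if u == i then n else nat_of_ord u.
have key_inj : injective key.
  move=> u v; rewrite /key; case: eqP => [->|_]; case: eqP => [->|_] //.
  - by move=> nv; have := ltn_ord v; rewrite -nv ltnn.
  - by move=> un; have := ltn_ord u; rewrite un ltnn.
  - exact: val_inj.
have [|||s sE] := perm_of_lex (wdiff a) (t := fun u v => key u < key v)%N.
- by move=> u; rewrite ltnn.
- by move=> v u w; apply: ltn_trans.
- by move=> u v uv; rewrite -neq_ltn (inj_eq key_inj).
have /eqF/face_max_vertexP/(_ i j wbij) : face_max pm_permutohedron a (pm_vertex s).
  by apply/face_max_vertexP => u v auv; rewrite sE auv.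
rewrite sE; move: waji; rewrite le_eqVlt => /orP [/eqP ->|lt_ji]; last first.
  by rewrite (lt_gtF lt_ji) (gt_eqF lt_ji).
rewrite ltxx eqxx /key eqxx [j == i]eq_sym (negbTE i_neq_j) /=.
by move=> /(ltn_trans (ltn_ord j)); rewrite ltnn.
Qed.

Lemma face_max_eqP a b :
  same_set (face_max pm_permutohedron b) (face_max pm_permutohedron a) <-> wlt b =2 wlt a.
Proof.
split=> [eqF i j|eqba x].
  by apply/idP/idP; apply: face_max_wlt => // y; rewrite eqF.
split=> x_max; have [[lam [lam_ge0 lam1 xE]] _] := x_max; move: x_max.
  by rewrite xE !face_max_pmP // => sorted_b s /sorted_b /(eq_sorted_by _ eqba).
by rewrite xE !face_max_pmP // => sorted_a s /sorted_a /(eq_sorted_by _ eqba).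
Qed.

Lemma pm_permutohedron_polytope : is_polytope pm_permutohedron.
Proof.
have sum_enum (V : nmodType) (F : 'S_n -> V) :
    \sum_s F s = \sum_(i < #|{: 'S_n}|) F (enum_val i).
  rewrite (reindex (@enum_val _ (mem {: 'S_n}))) //.
  by exists enum_rank => [i _|s _]; [exact: enum_valK | exact: enum_rankK].
exists #|{: 'S_n}|, (fun i => pm_vertex (enum_val i)) => x; split.
  move=> [lam [lam_ge0 lam1 ->]]; exists (fun i => lam (enum_val i)).
  by rewrite -sum_enum -(sum_enum _ (fun s => lam s *: pm_vertex s)).
move=> [lam [lam_ge0 lam1 ->]]; exists (fun s => lam (enum_rank s)); split=> //.
  by rewrite sum_enum -lam1; apply: eq_bigr => i _; rewrite enum_valK.
by rewrite sum_enum; apply: eq_bigr => i _; rewrite enum_valK.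
Qed.

(* The shear [(x, y) |-> (x, x + y)] maps [(pi, -pi)] to [(pi, 0)]. *)
Lemma pm_permutohedron_unimod : unimod_equiv pm_permutohedron (@permutohedron0 R n).
Proof.
exists (block_mx 1%:M 0 1%:M 1%:M), 0; split.
  by rewrite unitmxE det_lblock !det1 mulr1 unitr1.
have convE (lam : 'S_n -> R) : \sum_s lam s *: pm_vertex s =
    col_mx (\sum_s lam s *: perm_vec R s) (- \sum_s lam s *: perm_vec R s).
  under eq_bigr do rewrite scale_col_mx.
  by rewrite sum_col_mx -sumrN; congr col_mx; apply: eq_bigr => s _; rewrite scalerN.
rewrite map_block_mx map_mx1 !map_mx0 => y; split.
  move=> [_ [[lam [lam_ge0 lam1 ->]] ->]]; exists (\sum_s lam s *: pm_vertex s).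
  by split; [exists lam | rewrite convE mul_block_col !mul1mx mul0mx addr0 subrr addr0].
move=> [_ [[lam [lam_ge0 lam1 ->]] ->]]; exists (\sum_s lam s *: perm_vec R s).
by split; [exists lam | rewrite convE mul_block_col !mul1mx mul0mx addr0 subrr addr0].
Qed.

Lemma pm_permutohedron_gfan : gfan_eq_nfan (@toric_ideal (R[i]) n) pm_permutohedron.
Proof.
move=> K; split=> [[w Kw]|[a Ka]]; [exists w | exists a]; move=> x; rewrite ?Kw ?Ka.
  by apply: closure_same_set => y; rewrite init_ideal_eqP -face_max_eqP.
by apply: closure_same_set => y; rewrite /normal_cone face_max_eqP -init_ideal_eqP.
Qed.

End PmPermutohedron.

Section TieBreak.
Variables (R : realType) (n : nat).
Local Notation mn := 'X_{1.. n + n}.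
Local Notation lsh i := (lshift n (i : 'I_n)).
Local Notation rsh i := (rshift n (i : 'I_n)).
Local Notation poly := {mpoly (R[i])[n + n]}.
Local Notation I := (@toric_ideal (R[i]) n).
Variable lt : rel mn.
Hypothesis lt_mo : monomial_order lt.
Implicit Types (w : 'cV[R]_(n + n)) (m x c : mn) (p : poly).

Definition prec w x m : bool :=
  (mweight w x < mweight w m) || (mweight w x == mweight w m) && lt x m.

Lemma prec_irr w m : prec w m m = false.
Proof. by rewrite /prec ltxx eqxx (mo_irr lt_mo). Qed.

Lemma prec_trans w y x m : prec w x y -> prec w y m -> prec w x m.
Proof.
rewrite /prec => /orP [xy|/andP [/eqP xy ltxy]] /orP [ym|/andP [/eqP ym ltym]].
- by rewrite (lt_trans xy ym).
- by rewrite -ym xy.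
- by rewrite xy ym.
- by rewrite xy ym eqxx (mo_trans lt_mo ltxy ltym) orbT.
Qed.

Lemma precD w x m u : prec w x m -> prec w (x + u)%MM (m + u)%MM.
Proof.
rewrite /prec !mweightD => /orP [xm|/andP [/eqP xm ltxm]]; first by rewrite ltrD2r xm.
by rewrite xm eqxx ltxx (mo_addr lt_mo u ltxm) orbT.
Qed.

Definition reducible w m := exists x, same_fiber x m /\ prec w x m.

Lemma reducibleD w m u : reducible w m -> reducible w (m + u)%MM.
Proof. by move=> [x [xm wxm]]; exists (x + u)%MM; split; [apply: same_fiberD | apply: precD]. Qed.

Lemma init_ideal_lt_reducible w p :
  init_ideal_lt w lt I p -> forall m, m \in msupp p -> reducible w m.
Proof.
apply: (ideal_gen_ind (P := fun p => forall m, m \in msupp p -> reducible w m))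
  => [m|q r q_red r_red m /msuppD_le|h _ [f [If [m0 [m0f m0_lead ->]]]] m].
- by rewrite msupp0.
- by rewrite mem_cat => /orP [/q_red | /r_red].
rewrite -scalerAr => /msuppZ_le; rewrite (perm_mem (msuppMX _ _)) => /mapP [u _ ->].
apply: reducibleD; have f0 : f@_m0 != 0 by rewrite -mcoeff_msupp.
have [x [xf x_neq_m0 xm0 _]] :=
  sum_eq0_other (P := fun y : mn => same_fiber y m0) (msupp_uniq f) m0f (same_fiber_refl m0) f0
    (toric_ideal_fiber_sum m0 If).
by exists x; split; last exact: m0_lead.
Qed.

Lemma reducible_init_ideal_lt w p :
  (forall m, m \in msupp p -> reducible w m) -> init_ideal_lt w lt I p.
Proof.
move=> p_red; rewrite [p]mpolyE; apply: ideal_gen_sum => m mp.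
rewrite -mul_mpolyC; apply: ideal_genM; have [x [xm wxm]] := p_red m mp.
have x_neq_m : x != m by apply: contraTneq wxm => ->; rewrite prec_irr.
exists ('X_[m] - 'X_[x]); split; first exact/toric_ideal_binom/same_fiber_sym.
exists m; rewrite mcoeffB !mcoeffX eqxx (negbTE x_neq_m) subr0 scale1r; split=> //.
  by rewrite mcoeff_msupp mcoeffB !mcoeffX eqxx (negbTE x_neq_m) subr0 oner_neq0.
by move=> y /msuppB_le; rewrite !msuppX !inE => /orP [] /eqP -> //; rewrite eqxx.
Qed.

Lemma init_ideal_ltP w p :
  init_ideal_lt w lt I p <-> forall m, m \in msupp p -> reducible w m.
Proof. by split; [apply: init_ideal_lt_reducible | apply: reducible_init_ideal_lt]. Qed.

Definition tu_lt : rel 'I_n := fun l k => lt (tu l k) (tu k l).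

Lemma tu_lt_irr : irreflexive tu_lt.
Proof. by move=> k; rewrite /tu_lt mo_irr. Qed.

Lemma tu_lt_total k l : k != l -> tu_lt k l || tu_lt l k.
Proof.
move=> k_neq_l; apply: (mo_total lt_mo); apply: contra k_neq_l.
move=> /eqP /(congr1 (fun m => m (lsh k))).
by rewrite !tu_lsh eqxx eq_sym; case: (k == l) => // /eqP.
Qed.

(* Add [tu b b] to both sides and regroup: [tu a c + tu b b = tu a b + tu b c]. *)
Lemma tu_lt_trans : transitive tu_lt.
Proof.
move=> b a c ab bc; apply: (mo_cancelr lt_mo (c := tu b b)).
have regroup (u v : 'I_n) : (tu u v + tu b b = tu u b + tu b v)%MM.
  by apply/mnmP => j; rewrite /tu !mnmDE; lia.
rewrite !regroup [(tu c b + _)%MM]addmC.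
apply: (mo_trans lt_mo (mo_addr lt_mo _ ab)); exact: (mo_addl lt_mo _ (bc : lt (tu b c) (tu c b))).
Qed.

Definition wlex w : rel 'I_n :=
  fun l k => (wdiff w l < wdiff w k) || (wdiff w l == wdiff w k) && tu_lt l k.

Lemma prec_swap w c k l : wlex w l k -> prec w (c + tu l k)%MM (c + tu k l)%MM.
Proof.
rewrite /prec mweight_swap => /orP [lk|/andP [/eqP lk ltlk]]; first by apply/orP; left; lra.
by rewrite lk subrr addr0 eqxx ltxx (mo_addl lt_mo _ ltlk).
Qed.

Lemma wlex_total w k l : k != l -> wlex w k l || wlex w l k.
Proof. by move/tu_lt_total; rewrite /wlex; case: ltgtP => //= ->; rewrite eqxx. Qed.

Lemma reducibleP w m : reducible w m <-> ~~ swap_minimal (wlex w) m.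
Proof.
split=> [[x [xm wxm]]|/swap_minimalPn [c [k [l [mE wlk swap_fib]]]]]; last first.
  by exists (c + tu l k)%MM; rewrite mE; split; [rewrite -mE | apply: prec_swap].
apply/negP => /swap_minimalP min_m.
suff : x = m \/ prec w m x.
  by case=> [xE|wmx]; [move: wxm | have := prec_trans wxm wmx]; rewrite ?xE prec_irr.
apply: (same_fiber_ind (Q := fun x => x = m \/ prec w m x)) xm; first by left.
move=> c k l k_neq_l ml mk Qswap; right.
have wlk : wlex w l k by have := wlex_total w k_neq_l; rewrite (negbTE (min_m l k ml mk)).
by case: Qswap => [<-|wm]; [apply: prec_swap | apply: prec_trans wm (prec_swap c wlk)].
Qed.

Lemma init_ideal_ltX w m : init_ideal_lt w lt I 'X_[m] <-> ~~ swap_minimal (wlex w) m.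
Proof.
rewrite init_ideal_ltP -reducibleP msuppX; split=> [|m_red y]; first by apply; rewrite mem_head.
by rewrite inE => /eqP ->.
Qed.

Lemma eq_init_ideal_lt w1 w2 : wlex w1 =2 wlex w2 ->
  same_set (init_ideal_lt w1 lt I) (init_ideal_lt w2 lt I).
Proof.
move=> eqw p; rewrite !init_ideal_ltP; split=> p_red m mp; apply/reducibleP.
  by rewrite -(eq_swap_minimal eqw); apply/reducibleP/p_red.
by rewrite (eq_swap_minimal eqw); apply/reducibleP/p_red.
Qed.

Lemma wdiff_pi_weight (s : 'S_n) i : wdiff (pi_weight R s) i = 2 * (s i)%:R + 1 - n%:R.
Proof.
rewrite /wdiff /pi_weight col_mxEu col_mxEd !mxE natrB; last exact: ltnW.
by rewrite -addn1 natrD; ring.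
Qed.

Lemma wlex_pi_weight (s : 'S_n) l k : wlex (pi_weight R s) l k = (s l < s k)%N.
Proof.
rewrite /wlex !wdiff_pi_weight ltrD2r ltrD2r ltr_pM2l // ltr_nat.
have [//|_] := ltnP; apply/negP => /andP [/eqP wE].
have slk : s l = s k by apply/val_inj/eqP; rewrite -(eqr_nat R); apply/eqP; lra.
by rewrite (perm_inj slk) tu_lt_irr.
Qed.

Lemma init_ideal_lt_pi_weight w : exists s : 'S_n,
  same_set (init_ideal_lt w lt I) (init_ideal_lt (pi_weight R s) lt I).
Proof.
have [|||s sE] := perm_of_lex (wdiff w) (t := tu_lt).
- exact: tu_lt_irr.
- exact: tu_lt_trans.
- exact: tu_lt_total.
by exists s; apply: eq_init_ideal_lt => l k; rewrite wlex_pi_weight sE.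
Qed.

Lemma pi_weight_init_ideal_lt_inj (s s' : 'S_n) :
  same_set (init_ideal_lt (pi_weight R s) lt I) (init_ideal_lt (pi_weight R s') lt I) ->
  s = s'.
Proof.
move=> eqI; have ltE i j : (s i < s j)%N = (s' i < s' j)%N.
  rewrite -!wlex_pi_weight -[LHS]negbK -[RHS]negbK -!swap_minimal_tu.
  by apply/idP/idP => /init_ideal_ltX /eqI /init_ideal_ltX.
apply/permP => a; apply/val_inj/eq_add_S; rewrite -(sum_perm_leq s a) -(sum_perm_leq s' a).
by apply: eq_bigr => b _; rewrite leqNgt ltE -leqNgt.
Qed.

End TieBreak.

Theorem mainTheorem6 (R : realType) (n : nat) : (1 <= n)%N ->
  (* I_{S_n} has a state polytope unimodularly equivalent to Pi_n *)
  (exists P : 'cV[R]_(n + n) -> Prop,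
      state_polytope (@toric_ideal (R[i]) n) P /\
      unimod_equiv P (@permutohedron0 R n)) /\
  (* exactly n! distinct initial ideals, namely those for (pi, pi^c) *)
  (forall lt : rel (multinom (n + n)), monomial_order lt ->
     (forall w : 'cV[R]_(n + n), exists s : 'S_n,
        same_set (init_ideal_lt w lt (@toric_ideal (R[i]) n))
                 (init_ideal_lt (@pi_weight R n s) lt (@toric_ideal (R[i]) n))) /\
     (forall s s' : 'S_n,
        same_set (init_ideal_lt (@pi_weight R n s) lt (@toric_ideal (R[i]) n))
                 (init_ideal_lt (@pi_weight R n s') lt (@toric_ideal (R[i]) n)) ->
        s = s')).
Proof.
move=> _; split.
  exists (@pm_permutohedron R n); split; last exact: pm_permutohedron_unimod.
  by split; [exact: pm_permutohedron_polytope | exact: pm_permutohedron_gfan].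
move=> lt lt_mo; split; [exact: init_ideal_lt_pi_weight | exact: pi_weight_init_ideal_lt_inj].
Qed.
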